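(* Let $\alpha_1,\alpha_2,\alpha_3\in\mathbb{C}$ and let $\mathbf{x}=(x_s)\in\mathbb{C}^{\mathbb{Z}}$ satisfy, for all $v\in\mathbb{Z}$ (with $z_i=x_{v+i}$), $$z_0^2z_3^2+\alpha_1z_1^2z_2^2+\alpha_2z_0z_1z_2z_3+\alpha_3(z_0z_2^3+z_1^3z_3)=0.$$ Then for all $v\in\mathbb{Z}$, with $z_i=x_{v+i}$, $$(2z_0^2z_3+\alpha_2z_0z_1z_2+\alpha_3z_1^3)^2=(2z_{-1}z_2^2+\alpha_2z_0z_1z_2+\alpha_3z_1^3)^2=D,$$ where $D=\alpha_3^2z_1^6+2\alpha_2\alpha_3z_0z_1^4z_2+(\alpha_2^2-4\alpha_1)z_0^2z_1^2z_2^2-4\alpha_3z_0^3z_2^3$. *)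

From HB Require Import structures.
From mathcomp Require Import all_boot all_order all_algebra.
From mathcomp Require Import complex Rstruct.
From Stdlib Require Import Reals.

Set Implicit Arguments.
Unset Strict Implicit.
Unset Printing Implicit Defensive.

Import Order.TTheory GRing.Theory Num.Theory.

Definition Cx : Type := complex R.

(* Read as a quadratic polynomial in [z3] with leading coefficient [z0^2], the
   form of the recurrence completes to a square:
   [4 z0^2 Q(z0,z1,z2,z3) = (2 z0^2 z3 + a2 z0 z1 z2 + a3 z1^3)^2 - D(z0,z1,z2)],
   so [Q = 0] forces the square to equal the discriminant [D].  Since [Q] is
   invariant under reversing its arguments and [D] under swapping [z0] and [z2],
   the same identity read backwards at the window [z(-1), z0, z1, z2] gives the
   second square. *)
From HB Require Import structures.
From mathcomp Require Import all_boot all_order all_algebra.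
From mathcomp Require Import complex Rstruct.
From mathcomp Require Import ring.
Import GRing.Theory.

Set Implicit Arguments.
Unset Strict Implicit.
Local Open Scope ring_scope.

Section QuarticForm.

Variables (R : comPzRingType) (a1 a2 a3 : R).

Definition quartic_form (z0 z1 z2 z3 : R) : R :=
  z0 ^+ 2 * z3 ^+ 2 + a1 * z1 ^+ 2 * z2 ^+ 2 + a2 * z0 * z1 * z2 * z3
  + a3 * (z0 * z2 ^+ 3 + z1 ^+ 3 * z3).

Definition quartic_discr (z0 z1 z2 : R) : R :=
  a3 ^+ 2 * z1 ^+ 6 + 2 * a2 * a3 * z0 * z1 ^+ 4 * z2
  + (a2 ^+ 2 - 4 * a1) * z0 ^+ 2 * z1 ^+ 2 * z2 ^+ 2
  - 4 * a3 * z0 ^+ 3 * z2 ^+ 3.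

Lemma quartic_form_rev (z0 z1 z2 z3 : R) :
  quartic_form z3 z2 z1 z0 = quartic_form z0 z1 z2 z3.
Proof. by rewrite /quartic_form; ring. Qed.

Lemma quartic_discrC (z0 z1 z2 : R) :
  quartic_discr z2 z1 z0 = quartic_discr z0 z1 z2.
Proof. by rewrite /quartic_discr; ring. Qed.

Lemma quartic_form_complete_square (z0 z1 z2 z3 : R) :
  (2 * z0 ^+ 2 * z3 + a2 * z0 * z1 * z2 + a3 * z1 ^+ 3) ^+ 2
  = quartic_discr z0 z1 z2 + 4 * z0 ^+ 2 * quartic_form z0 z1 z2 z3.
Proof. by rewrite /quartic_discr /quartic_form; ring. Qed.

Lemma quartic_form_eq0_sqr (z0 z1 z2 z3 : R) :
  quartic_form z0 z1 z2 z3 = 0 ->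
  (2 * z0 ^+ 2 * z3 + a2 * z0 * z1 * z2 + a3 * z1 ^+ 3) ^+ 2
  = quartic_discr z0 z1 z2.
Proof. by move=> Q0; rewrite quartic_form_complete_square Q0 mulr0 addr0. Qed.

Lemma quartic_form_eq0_sqr_rev (zm z0 z1 z2 : R) :
  quartic_form zm z0 z1 z2 = 0 ->
  (2 * zm * z2 ^+ 2 + a2 * z0 * z1 * z2 + a3 * z1 ^+ 3) ^+ 2
  = quartic_discr z0 z1 z2.
Proof.
rewrite -quartic_form_rev => /quartic_form_eq0_sqr.
by rewrite quartic_discrC => <-; ring.
Qed.

End QuarticForm.

Theorem proposition6p1 (a1 a2 a3 : complex Rdefinitions.R)
  (x : int -> complex Rdefinitions.R)
  (hx : forall v : int,
      let z i := x (v + i) in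
      z 0 ^+ 2 * z 3 ^+ 2 + a1 * z 1 ^+ 2 * z 2 ^+ 2
      + a2 * z 0 * z 1 * z 2 * z 3
      + a3 * (z 0 * z 2 ^+ 3 + z 1 ^+ 3 * z 3) = 0) :
  forall v : int,
    let z i := x (v + i) in
    let D := a3 ^+ 2 * z 1 ^+ 6 + 2 * a2 * a3 * z 0 * z 1 ^+ 4 * z 2
             + (a2 ^+ 2 - 4 * a1) * z 0 ^+ 2 * z 1 ^+ 2 * z 2 ^+ 2
             - 4 * a3 * z 0 ^+ 3 * z 2 ^+ 3 in
    (2 * z 0 ^+ 2 * z 3 + a2 * z 0 * z 1 * z 2 + a3 * z 1 ^+ 3) ^+ 2 = D /\
    (2 * z (-1) * z 2 ^+ 2 + a2 * z 0 * z 1 * z 2 + a3 * z 1 ^+ 3) ^+ 2 = D.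
Proof.
move=> v z D.
have Qv : quartic_form a1 a2 a3 (z 0) (z 1) (z 2) (z 3) = 0 := hx v.
have Qv1 : quartic_form a1 a2 a3 (z (-1)) (z 0) (z 1) (z 2) = 0.
  by have := hx (v - 1); rewrite /= -!(addrA v).
have -> : D = quartic_discr a1 a2 a3 (z 0) (z 1) (z 2) by [].
by split; [exact: quartic_form_eq0_sqr | exact: quartic_form_eq0_sqr_rev].
Qed.
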